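(* Let $N\ge1$, let $-1=x_0<x_1<\cdots<x_N<1$ be Gauss–Radau points, let $\{l_j\}_{j=0}^N\subset\mathbb{P}_N$ be the Lagrange basis polynomials at these points, and let $B_0(x)=1$, $B_j(x)=\int_{-1}^xL_j(t)\,dt$ ($1\le j\le N$), where $L_j(x)=\frac{Q_N(x)}{(x-x_j)Q_N'(x_j)}$, $Q_N(x)=\prod_{i=1}^N(x-x_i)$; thus $B_j(-1)=0$, $B_j'(x_i)=\delta_{ij}$ for $1\le i,j\le N$. Set $b_{ij}=B_j(x_i)$, $d_{ij}=l_j'(x_i)$ and $\mathbf B=(b_{ij})_{0\le i,j\le N}$, $\mathbf B_{\rm in}=(b_{ij})_{1\le i,j\le N}$, $\mathbf D=(d_{ij})_{0\le i,j\le N}$, $\mathbf D_{\rm in}=(d_{ij})_{1\le i,j\le N}$. Let $\widetilde{\mathbf D}$ be obtained from $\mathbf D$ by replacing its first row by $(1,0,\dots,0)$. Then $$\mathbf D_{\rm in}\mathbf B_{\rm in}=\mathbf I_N,\qquad \widetilde{\mathbf D}\,\mathbf B=\mathbf I_{N+1}.$$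
   Context: Gauss–Radau points: Legendre–Gauss–Radau points (zeros of $P_N+P_{N+1}$, $P_k$ the Legendre polynomials) or Chebyshev–Gauss–Radau points $x_j=-\cos(2j\pi/(2N+1))$. $\mathbb{P}_N$ is the space of polynomials of degree at most $N$; $\mathbf I_M$ is the $M\times M$ identity matrix. *)

(* Everything is stated over algC (the algebraic complex
   numbers, a numClosedFieldType); the Gauss-Radau points are real elements. *)
From HB Require Import structures.
From mathcomp Require Import all_boot all_order all_algebra all_field.
Set Implicit Arguments. Unset Strict Implicit. Unset Printing Implicit Defensive.
Import Order.TTheory GRing.Theory Num.Theory.
Local Open Scope ring_scope.

Section Defs.
Variable F : fieldType.

(* leg_pair n = (P_n, P_(n+1)), Legendre polynomials via Bonnet's recurrence
   (n+2) P_(n+2) = (2n+3) X P_(n+1) - (n+1) P_n, P_0 = 1, P_1 = X. *)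
Fixpoint leg_pair (n : nat) : {poly F} * {poly F} :=
  match n with
  | 0 => (1, 'X)
  | n'.+1 =>
      let pq := leg_pair n' in
      (pq.2, (n'.+2%:R)^-1 *: ((2 * n' + 3)%N%:R *: ('X * pq.2) - n'.+1%:R *: pq.1))
  end.

Definition legendre (n : nat) : {poly F} := (leg_pair n).1.

Definition prim (p : {poly F}) : {poly F} :=
  \poly_(i < (size p).+1) (if i is k.+1 then p`_k / k.+1%:R else 0).

Variable N : nat.
Variable x : 'I_N.+1 -> F.

Definition lagr (j : 'I_N.+1) : {poly F} :=
  \prod_(k < N.+1 | k != j) ((x j - x k)^-1 *: ('X - (x k)%:P)).

Definition QN : {poly F} := \prod_(i < N.+1 | i != ord0) ('X - (x i)%:P).

Definition Lpol (j : 'I_N.+1) : {poly F} :=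
  (QN %/ ('X - (x j)%:P)) * ((QN^`()).[x j])^-1%:P.

Definition Bpol (j : 'I_N.+1) : {poly F} :=
  if j == ord0 then 1 else prim (Lpol j) - ((prim (Lpol j)).[-1])%:P.

Definition Bmx : 'M[F]_N.+1 := \matrix_(i, j) (Bpol j).[x i].
Definition Dmx : 'M[F]_N.+1 := \matrix_(i, j) ((lagr j)^`()).[x i].
Definition Bin : 'M[F]_N := \matrix_(i, j) Bmx (lift ord0 i) (lift ord0 j).
Definition Din : 'M[F]_N := \matrix_(i, j) Dmx (lift ord0 i) (lift ord0 j).
Definition Dtilde : 'M[F]_N.+1 :=
  \matrix_(i, j) (if i == ord0 then (j == ord0)%:R else Dmx i j).
End Defs.

Definition LGR_points (N : nat) (x : 'I_N.+1 -> algC) : Prop :=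
  forall j, root (legendre algC N + legendre algC N.+1) (x j).

(* Chebyshev-Gauss-Radau: x_j = -cos(2 j pi/(2N+1)) = - Re(w^j),
   w = exp(2 i pi/(2N+1)) = ((2N+1).-root (-1))^2. *)
Definition CGR_points (N : nat) (x : 'I_N.+1 -> algC) : Prop :=
  forall j : 'I_N.+1, x j = - 'Re ((((N.*2).+1).-root (-1)) ^+ (2 * j)).

Definition GaussRadau (N : nat) (x : 'I_N.+1 -> algC) : Prop :=
  LGR_points x \/ CGR_points x.

From HB Require Import structures.
From mathcomp Require Import all_boot all_order all_algebra all_field.
Import Order.TTheory GRing.Theory Num.Theory.
Local Open Scope ring_scope.

Set Implicit Arguments.
Unset Strict Implicit.

(* For pairwise distinct nodes x_0, ..., x_N, every polynomial
   p of degree at most N is its own Lagrange interpolant, so differentiating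
   the interpolation formula gives  p'(x_i) = \sum_j d_ij p(x_j):  the matrix
   D is the differentiation matrix on P_N.  Apply this to p = B_k (which has
   degree at most N): B_0' = 0 and B_k' = L_k for k >= 1, while L_k(x_i) is
   the Kronecker delta for i, k >= 1.  Hence every row i >= 1 of D B is the
   i-th row of the identity.  The first row of D~ B is (B_k(x_0))_k, which is
   (1,0,...,0) because B_k(-1) = 0 for k >= 1 and x_0 = -1; this gives
   D~ B = I.  Since moreover B_k(x_0) = 0 for k >= 1, dropping the index j = 0
   from the sums of rows i >= 1 changes nothing, whence D_in B_in = I. *)

Lemma size_prod_XsubC_pred (F : fieldType) (T : finType) (P : pred T)
    (a : T -> F) :
  size (\prod_(i | P i) ('X - (a i)%:P)) = #|P|.+1.
Proof. by rewrite -big_enum size_prod_XsubC cardE. Qed.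

Section Primitive.
Variable F : fieldType.
Hypothesis natr_succ_neq0 : forall n : nat, (n.+1%:R : F) != 0.

Lemma prim_deriv (p : {poly F}) : (prim p)^`() = p.
Proof.
apply/polyP => i; rewrite coef_deriv /prim coef_poly ltnS.
case: ltnP => [_|p_small]; first by rewrite -[LHS]mulr_natr mulfVK.
by rewrite mul0rn nth_default.
Qed.

End Primitive.

Section Lagrange.
Variables (F : fieldType) (N : nat) (x : 'I_N.+1 -> F).
Hypothesis x_inj : injective x.

Lemma lagr_node (i j : 'I_N.+1) : (lagr x j).[x i] = (i == j)%:R.
Proof.
rewrite /lagr horner_prod.
have [->|neq_ij] := eqVneq i j.
  apply: big1 => k neq_kj; rewrite hornerZ hornerXsubC mulVf //.
  by rewrite subr_eq0 (inj_eq x_inj) eq_sym.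
by rewrite (bigD1 i) //= hornerZ hornerXsubC subrr mulr0 mul0r.
Qed.

Lemma size_lagr (j : 'I_N.+1) : (size (lagr x j) <= N.+1)%N.
Proof.
rewrite /lagr scaler_prod (leq_trans (size_scale_leq _ _)) //.
by rewrite size_prod_XsubC_pred cardC1 card_ord.
Qed.

(* Lagrange interpolation reproduces every polynomial of degree <= N: the
   difference has degree <= N and N + 1 distinct roots. *)
Lemma lagrange_interpolation (p : {poly F}) : (size p <= N.+1)%N ->
  p = \sum_j p.[x j] *: lagr x j.
Proof.
move=> size_p; apply/eqP; rewrite -subr_eq0; apply/eqP.
apply: (@roots_geq_poly_eq0 _ _ (codom x)).
- apply/allP => _ /codomP [i ->].
  rewrite /root hornerD hornerN horner_sum (bigD1 i) //= big1.
    by rewrite hornerZ lagr_node eqxx mulr1 addr0 subrr.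
  by move=> k neq_ki; rewrite hornerZ lagr_node eq_sym (negPf neq_ki) mulr0.
- by rewrite map_inj_uniq ?enum_uniq.
rewrite size_codom card_ord (leq_trans (size_polyD _ _)) //.
rewrite geq_max size_p size_polyN /=.
apply: (big_ind (fun r : {poly F} => size r <= N.+1)%N) => [|q r|j _].
- by rewrite size_poly0.
- by move=> Hq Hr; rewrite (leq_trans (size_polyD _ _)) // geq_max Hq.
- exact: leq_trans (size_scale_leq _ _) (size_lagr j).
Qed.

Lemma Dmx_differentiates (p : {poly F}) (i : 'I_N.+1) :
  (size p <= N.+1)%N -> p^`().[x i] = \sum_j Dmx x i j * p.[x j].
Proof.
move=> size_p; rewrite [in LHS](lagrange_interpolation size_p).
rewrite raddf_sum horner_sum; apply: eq_bigr => j _.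
by rewrite /= derivZ hornerZ mxE mulrC.
Qed.

End Lagrange.

Section RadauBasis.
Variables (F : fieldType) (N : nat) (x : 'I_N.+1 -> F).
Hypothesis x_inj : injective x.
Hypothesis natr_succ_neq0 : forall n : nat, (n.+1%:R : F) != 0.

Let QN_deflated (j : 'I_N.+1) : {poly F} :=
  \prod_(i | (i != ord0) && (i != j)) ('X - (x i)%:P).

Let QN_deflatedE (j : 'I_N.+1) : j != ord0 ->
  QN x = ('X - (x j)%:P) * QN_deflated j.
Proof. by move=> nz_j; rewrite /QN (bigD1 j). Qed.

Lemma Lpol_node (i j : 'I_N.+1) : i != ord0 -> j != ord0 ->
  (Lpol x j).[x i] = (i == j)%:R.
Proof.
move=> nz_i nz_j; rewrite /Lpol (QN_deflatedE nz_j) derivM derivXsubC mul1r.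
rewrite mulKp ?polyXsubC_eq0 // hornerM hornerC.
rewrite hornerD hornerM hornerXsubC subrr mul0r addr0.
have [<-|neq_ij] := eqVneq i j.
  rewrite mulfV // horner_prod; apply/prodf_neq0 => k /andP [_ neq_kj].
  by rewrite hornerXsubC subr_eq0 (inj_eq x_inj) eq_sym.
by rewrite horner_prod (bigD1 i) ?nz_i ?neq_ij //= hornerXsubC subrr !mul0r.
Qed.

Lemma size_Lpol (j : 'I_N.+1) : (size (Lpol x j) <= N)%N.
Proof.
rewrite /Lpol mulrC mul_polyC (leq_trans (size_scale_leq _ _)) //.
rewrite size_divp ?polyXsubC_eq0 // size_XsubC /QN size_prod_XsubC_pred.
by rewrite cardC1 card_ord subn1.
Qed.

Lemma size_Bpol (j : 'I_N.+1) : (size (Bpol x j) <= N.+1)%N.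
Proof.
rewrite /Bpol; case: eqP => [_|_]; first by rewrite size_poly1.
rewrite (leq_trans (size_polyD _ _)) // geq_max size_polyN size_polyC.
rewrite (leq_trans (size_poly _ _)) ?ltnS ?size_Lpol //.
by case: (_ != 0).
Qed.

Lemma Bpol_at_minus1 (j : 'I_N.+1) : (Bpol x j).[-1] = (j == ord0)%:R.
Proof.
rewrite /Bpol; case: eqP => _; first by rewrite hornerC.
by rewrite hornerD hornerN hornerC subrr.
Qed.

Lemma Bpol_deriv (j : 'I_N.+1) :
  (Bpol x j)^`() = if j == ord0 then 0 else Lpol x j.
Proof.
rewrite /Bpol; case: eqP => _; first by rewrite derivC.
by rewrite derivB prim_deriv // derivC subr0.
Qed.

Lemma DmxBmx_interior_row (i k : 'I_N.+1) : i != ord0 ->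
  \sum_j Dmx x i j * Bmx x j k = (i == k)%:R.
Proof.
move=> nz_i; under eq_bigr do rewrite [Bmx _ _ _]mxE.
rewrite -Dmx_differentiates ?size_Bpol // Bpol_deriv.
by case: eqP => [->|/eqP nz_k]; rewrite ?horner0 ?(negPf nz_i) ?Lpol_node.
Qed.

Hypothesis x0 : x ord0 = -1.

Lemma Bmx_first_row (k : 'I_N.+1) : Bmx x ord0 k = (k == ord0)%:R.
Proof. by rewrite mxE x0 Bpol_at_minus1. Qed.

Lemma Dtilde_Bmx : Dtilde x *m Bmx x = 1%:M.
Proof.
apply/matrixP => i k; rewrite !mxE; under eq_bigr do rewrite mxE.
have [->|nz_i] := eqVneq i ord0; last by rewrite DmxBmx_interior_row.
rewrite (bigD1 ord0) //= big1 => [|j /negPf ->]; last by rewrite mul0r.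
by rewrite mul1r addr0 Bmx_first_row eq_sym.
Qed.

(* The j = 0 column of D meets the zero entries B_k(x_0), k >= 1, so the
   interior block of D B is D_in B_in. *)
Lemma Din_Bin : Din x *m Bin x = 1%:M.
Proof.
apply/matrixP => i k; rewrite !mxE.
under eq_bigr do rewrite [Din _ _ _]mxE [Bin _ _ _]mxE.
have nz_lift (j : 'I_N) : lift ord0 j != ord0 by rewrite eq_sym neq_lift.
have := DmxBmx_interior_row (lift ord0 k) (nz_lift i).
rewrite big_ord_recl Bmx_first_row (negPf (nz_lift k)) mulr0 add0r.
by move=> ->; rewrite (inj_eq lift_inj).
Qed.

End RadauBasis.

Lemma increasing_nodes_inj (R : numDomainType) (N : nat) (x : 'I_N.+1 -> R) :
  (forall i j : 'I_N.+1, (i < j)%N -> x i < x j) -> injective x.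
Proof.
move=> x_incr i j eq_x; apply/eqP; rewrite -val_eqE.
case: ltngtP => [/x_incr|/x_incr|//]; by rewrite eq_x ltxx.
Qed.

Unset Implicit Arguments.

Theorem theorem4p1 (N : nat) (x : 'I_N.+1 -> algC) :
  (1 <= N)%N ->
  x ord0 = -1 ->
  (forall i j : 'I_N.+1, (i < j)%N -> x i < x j) ->
  x ord_max < 1 ->
  GaussRadau x ->
  Din x *m Bin x = 1%:M /\ Dtilde x *m Bmx x = 1%:M.
Proof.
move=> _ x0 x_incr _ _.
have x_inj := increasing_nodes_inj x_incr.
have char0 (n : nat) : (n.+1%:R : algC) != 0 by rewrite pnatr_eq0.
by split; [exact: (Din_Bin x_inj char0 x0) | exact: (Dtilde_Bmx x_inj char0 x0)].
Qed.
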